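(* In the u2D Toda setting described in the context, fix integers $l,m,n$. Then \[ \begin{aligned} &\tau(l+1,m,n)=\max_{0\le k_1\le N}\bigl(\tau_c(-1,N-k_1)-k_1\delta\bigr),\qquad \tau(l,m-1,n)=\max_{0\le k_2\le N}\bigl(\tau_c(k_2-1,N)-k_2\varepsilon\bigr),\\ &\tau(l+1,m,n-1)=\max_{0\le k_1\le N}\bigl(\tau_c(N-k_1-1,N)-k_1\delta\bigr),\qquad \tau(l,m-1,n+1)=\max_{0\le k_2\le N}\bigl(\tau_c(-1,k_2)-k_2\varepsilon\bigr),\\ &\tau(l,m,n)=\tau_c(-1,N),\qquad \tau(l+1,m-1,n)=\max_{0\le k_1,k_2\le N}\bigl(\Psi(k_1,k_2)-k_1\delta-k_2\varepsilon\bigr), \end{aligned} \] where for $0\le k_1,k_2\le N$ \[ \Psi(k_1,k_2)=\begin{cases} \max_{0\le i\le k_2}\tau_c(k_2-i-1,\,N-k_1+i) & (k_1\ge k_2\text{ and }N-k_1\ge k_2),\\ \max_{0\le i\le k_1}\tau_c(k_2-i-1,\,N-k_1+i) & (N-k_1\ge k_2\ge k_1),\\ \max_{0\le i\le N-k_1}\tau_c(i-1,\,N-k_1+k_2-i) & (k_1\ge k_2\ge N-k_1),\\ \max_{0\le i\le N-k_2}\tau_c(N-k_1-i-1,\,k_2+i) & (k_2\ge N-k_1\text{ and }k_2\ge k_1). \end{cases} \] Moreover, for $1\le k_1,k_2\le N$: $\Psi(k_1,k_2)=\max(\Psi(k_1-1,k_2-1),\tau_c(k_2-1,N-k_1))$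 if $k_2-1<N-k_1$; $\Psi(k_1-1,k_2-1)=\max(\Psi(k_1,k_2),\tau_c(N-k_1,k_2-1))$ if $k_2-1>N-k_1$; $\Psi(k_1,k_2)=\Psi(k_1-1,k_2-1)$ if $k_2-1=N-k_1$.
   Context: Ultradiscrete permanent (UP): for a real $N\times N$ matrix $A=(a_{ij})$, $\max A\equiv\max_{\pi}\sum_{i=1}^N a_{i\pi(i)}$ over all permutations $\pi$ of $\{1,\dots,N\}$; $\max[\bm{b}_1\ \dots\ \bm{b}_N]$ is the UP of the matrix with columns $\bm{b}_j$. u2D Toda setting: $N\ge1$; real $\delta,\varepsilon>0$; arbitrary real $r_i,c_i,c'_i$ ($1\le i\le N$); for integers $l,m,n$, $\eta_i(l,m,n)=\max(0,r_i-\delta)l-\max(0,-r_i-\varepsilon)m+r_in+c_i$, $\eta'_i(l,m,n)=\max(0,-r_i-\delta)l-\max(0,r_i-\varepsilon)m-r_in+c'_i$, $\phi_i(l,m,n)=\max(\eta_i(l,m,n),\eta'_i(l,m,n))$, and $\tau(l,m,n)=\max[\phi_i(l,m,n+j-1)]_{1\le i,j\le N}$. With $l,m,n$ fixed put $\bm{\phi}(j)=(\phi_i(l,m,n+j))_{1\le i\le N}$, and for $-1\le\alpha<\beta\le N$ let $\tau_c(\alpha,\beta)=\max[\bm{\phi}(-1)\ \dots\ \widehat{\bm{\phi}(\alpha)}\ \dots\ \widehat{\bm{\phi}(\beta)}\ \dots\ \bm{\phi}(N)]$, the UP of the $N$ columns $\bm{\phi}(j)$, $j\in\{-1,0,\dots,N\}\setminus\{\alpha,\beta\}$.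 *)

From HB Require Import structures.
From mathcomp Require Import all_boot all_order all_algebra all_fingroup.
Set Implicit Arguments. Unset Strict Implicit. Unset Printing Implicit Defensive.
Import Order.TTheory GRing.Theory Num.Theory.
Local Open Scope ring_scope.

(* Ultradiscrete permanent: max over permutations s of sum_i A i (s i).
   The identity permutation's value is used as the (absorbed) seed of the max. *)
Definition upm (R : realDomainType) (N : nat) (A : 'M[R]_N) : R :=
  \big[Num.max / \sum_(i < N) A i i]_(s : 'S_N) \sum_(i < N) A i (s i).

Definition maxto (R : realDomainType) (n : nat) (f : nat -> R) : R :=
  \big[Num.max / f 0%N]_(0 <= i < n.+1) f i.

Section U2DToda.
Variables (R : realFieldType) (N : nat) (d e : R) (r c c' : 'I_N -> R).

(* row index i : 'I_N stands for the paper's index i+1 *)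
Definition eta (i : 'I_N) (l m n : int) : R :=
  Num.max 0 (r i - d) *~ l - Num.max 0 (- r i - e) *~ m + r i *~ n + c i.
Definition eta' (i : 'I_N) (l m n : int) : R :=
  Num.max 0 (- r i - d) *~ l - Num.max 0 (r i - e) *~ m - r i *~ n + c' i.
Definition phi (i : 'I_N) (l m n : int) : R := Num.max (eta i l m n) (eta' i l m n).

(* tau(l,m,n) = UP [phi_i(l,m,n+j-1)]_{1<=i,j<=N}; column j : 'I_N is paper's j+1 *)
Definition tau (l m n : int) : R :=
  upm (\matrix_(i < N, j < N) phi i l m (n + (j : nat)%:Z)).

(* the column labels -1,0,...,N with alpha and beta removed, in increasing order *)
Definition cols (a b : int) : seq int :=
  [seq j <- [seq (k : nat)%:Z - 1 | k <- iota 0 N.+2] | (j != a) && (j != b)].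

Definition tauc (l m n : int) (a b : int) : R :=
  upm (\matrix_(i < N, j < N) phi i l m (n + nth 0 (cols a b) j)).

Definition Psi (l m n : int) (k1 k2 : nat) : R :=
  let K1 := (k1 : nat)%:Z in let K2 := (k2 : nat)%:Z in let NN := (N : nat)%:Z in
  if (K1 >= K2) && (NN - K1 >= K2) then
    maxto k2 (fun i => tauc l m n (K2 - i%:Z - 1) (NN - K1 + i%:Z))
  else if (NN - K1 >= K2) && (K2 >= K1) then
    maxto k1 (fun i => tauc l m n (K2 - i%:Z - 1) (NN - K1 + i%:Z))
  else if (K1 >= K2) && (K2 >= NN - K1) then
    maxto (N - k1) (fun i => tauc l m n (i%:Z - 1) (NN - K1 + K2 - i%:Z))
  else
    maxto (N - k2) (fun i => tauc l m n (NN - K1 - i%:Z - 1) (K2 + i%:Z)).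

End U2DToda.

From Pilot Require Import Defs.
From HB Require Import structures.
From mathcomp Require Import all_boot all_order all_algebra all_fingroup.
From mathcomp Require Import ring lra zify.
Import Order.TTheory GRing.Theory Num.Theory.
Local Open Scope ring_scope.
Set Implicit Arguments. Unset Strict Implicit. Unset Printing Implicit Defensive.

(* Each row u |-> phi_i(l,m,n+u) is a maximum of two affine functions of u, hence
   discretely convex.  A unit step in l (resp. m) turns the entry phi_i(n+j) into
   max(phi_i(n+j), phi_i(n+j+1) - delta) (resp. max(phi_i(n+j), phi_i(n+j-1) - epsilon)),
   so the permanent of the new matrix is the maximum, over permutations p and column
   shifts x_j in {-1,0,1}, of sum_j phi_{p j}(n+j+x_j) minus the cost of the shifts.
   Where x_k > x_(k+1), convexity of the two rows involved lets one replace
   (x_k, x_(k+1)) by (x_k - 1, x_(k+1) + 1), transposing p k and p (k+1) if necessary,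
   without losing value or raising the cost.  This bubble sort leaves only nondecreasing
   shifts -1^A 0^(B-A) 1^(N-B), whose permanents are exactly tau_c(A-1,B); the formulas
   follow by reading off which (A,B) occur.  Psi(k1,k2) is the maximum of tau_c along a
   segment of an antidiagonal, which gives its four case formulas and its recurrences. *)

Lemma le_bounds_eq (R : realDomainType) (x y : R) :
  (forall X, x <= X <-> y <= X) -> x = y.
Proof. by move=> h; apply/le_anti/andP; split; [apply/h | apply/h]. Qed.

Lemma maxto_le (R : realDomainType) n (f : nat -> R) X :
  maxto n f <= X <-> (forall j, (j <= n)%N -> f j <= X).
Proof.
rewrite /maxto; split=> [h j jn|h].
  by apply: le_trans h; apply: le_bigmax_seq; rewrite ?mem_index_iota.
rewrite big_seq; apply: bigmax_le => [|j]; first exact: h.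
by rewrite mem_index_iota => /andP[_]; apply: h.
Qed.

Lemma upm_le (R : realDomainType) n (A : 'M[R]_n) X :
  upm A <= X <-> (forall s : 'S_n, \sum_(i < n) A i (s i) <= X).
Proof.
split=> [h s|h]; first by apply: le_trans h; apply: le_bigmax.
by apply: bigmax_le => [|s _]; [have := h 1%g; under eq_bigr do rewrite perm1 | apply: h].
Qed.

Lemma eq_maxto (R : realDomainType) n (f g : nat -> R) :
  (forall j, (j <= n)%N -> f j = g j) -> maxto n f = maxto n g.
Proof.
move=> fg; apply: le_bounds_eq => X; rewrite !maxto_le.
by split=> le_X j jn; [rewrite -fg | rewrite fg] => //; apply: le_X.
Qed.

Definition convexZ (R : numDomainType) (f : int -> R) :=
  forall u, f u + f u <= f (u - 1) + f (u + 1).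

Lemma convexZ_exchange (R : realDomainType) (f g : int -> R) x y :
  convexZ f -> convexZ g -> y <= x <= y + 1 ->
  f x + g y <= Num.max (f (x - 1) + g (y + 1)) (g (x - 1) + f (y + 1)).
Proof.
move=> cf cg /andP[yx xy]; rewrite le_max.
have [->|/eqP ne] := eqVneq x (y + 1); first by rewrite addrK [g y + _]addrC lexx orbT.
have -> : x = y by lia.
have := cf y; have := cg y.
by case: lerP => //= h; lra.
Qed.

Definition nondecreasing_on N (s : nat -> int) := forall k, (k.+1 < N)%N -> s k <= s k.+1.

Definition step (A B k : nat) : int :=
  if (k < A)%N then -1 else if (k < B)%N then 0 else 1.

Lemma nondecreasing_le N (s : nat -> int) : nondecreasing_on N s ->
  forall k k', (k <= k' < N)%N -> s k <= s k'.
Proof.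
move=> mono k; elim=> [|k' IH] /andP[kk' k'N]; first by have -> : k = 0%N by lia.
have [->|ne] := eqVneq k k'.+1; first exact: lexx.
by apply: le_trans (mono _ k'N); apply: IH; lia.
Qed.

Lemma nondecreasing_threshold N (s : nat -> int) t : nondecreasing_on N s ->
  let a := find (fun k => t < s k) (iota 0 N) in
  (a <= N)%N /\ forall k, (k < N)%N -> (t < s k) = (a <= k)%N.
Proof.
move=> mono a; have aN : (a <= N)%N by rewrite -(size_iota 0 N) find_size.
split=> // k kN; case: (ltnP k a) => ka.
  by have := before_find 0%N ka; rewrite nth_iota ?add0n //; lia.
have : t < s a.
  have := @nth_find _ 0%N (fun k => t < s k) (iota 0 N).
  by rewrite has_find size_iota nth_iota ?add0n; [apply; lia | lia].
by move/lt_le_trans; apply; apply: nondecreasing_le mono _ _ _; lia.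
Qed.

Lemma nondecreasing_step N (s : nat -> int) :
  (forall k, (k < N)%N -> -1 <= s k <= 1) -> nondecreasing_on N s ->
  exists A B, (A <= B <= N)%N /\ forall k, (k < N)%N -> s k = step A B k.
Proof.
move=> range mono.
have [AN sA] := nondecreasing_threshold (-1) mono.
have [BN sB] := nondecreasing_threshold 0 mono.
set A := find _ _ in AN sA; set B := find _ _ in BN sB.
have AB : (A <= B)%N.
  case: (ltnP B N) => [BN'|]; last by lia.
  by rewrite -sA // (lt_trans _ (_ : 0 < s B)) // sB.
exists A, B; split; first by rewrite AB.
move=> k kN; have := sA k kN; have := sB k kN; have := range k kN.
by rewrite /step; case: ltnP; case: ltnP; lia.
Qed.

Lemma sum_agree_off2 (V : zmodType) n (G G' : 'I_n -> V) (a b : 'I_n) : a != b ->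
  (forall j, j != a -> j != b -> G j = G' j) ->
  \sum_j G j = \sum_j G' j + (G a - G' a) + (G b - G' b).
Proof.
move=> ab eqG; have ba : b != a by rewrite eq_sym.
rewrite (bigD1 a) // (bigD1 b) //= [X in _ = X + _ + _](bigD1 a) //.
rewrite [X in _ = _ + X + _ + _](bigD1 b) //= (eq_bigr G') => [|j /andP[]]; last exact: eqG.
by rewrite (addrAC (G' a)) subrKC -addrA (addrAC (G' b)) subrKC.
Qed.

Section ShiftExchange.
Variables (R : realDomainType) (N : nat) (F : 'I_N -> int -> R).
Variables (c : int -> R) (ok : pred int).
Hypothesis F_convex : forall i, convexZ (F i).
Hypothesis ok_range : forall x, ok x -> -1 <= x <= 1.
Hypothesis ok0 : ok 0.
Hypothesis c0 : c 0 = 0.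
Hypothesis c_convex : ok (-1) -> ok 1 -> 0 <= c (-1) + c 1.

Implicit Types (s : nat -> int) (p : 'S_N).

Definition shift_val p s := \sum_(k < N) F (p k) (k%:Z + s k).
Definition shift_cost s := \sum_(k < N) c (s k).
Definition admissible s := forall k, (k < N)%N -> ok (s k).
Definition potential s := \sum_(k < N) k%:Z * (1 - s k).

Lemma potential_ge0 s : admissible s -> 0 <= potential s.
Proof.
move=> adm; apply: sumr_ge0 => k _.
by have /andP[_ le1] := ok_range (adm k (ltn_ord k)); rewrite mulr_ge0 // subr_ge0.
Qed.

Definition bubble s k j : int :=
  if j == k then s k - 1 else if j == k.+1 then s k.+1 + 1 else s j.

Section Bubble.
Variables (s : nat -> int) (k : nat).
Hypotheses (adm : admissible s) (kN : (k.+1 < N)%N) (desc : s k.+1 < s k).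
Let K : 'I_N := Ordinal (ltnW kN).
Let K1 : 'I_N := Ordinal kN.

Lemma sum_bubble (V : zmodType) (G G' : 'I_N -> int -> V) :
  (forall j : 'I_N, j != K -> j != K1 -> G j =1 G' j) ->
  \sum_(j < N) G j (bubble s k j) = \sum_(j < N) G' j (s j)
    + (G K (s k - 1) - G' K (s k)) + (G K1 (s k.+1 + 1) - G' K1 (s k.+1)).
Proof.
move=> eqG; rewrite (@sum_agree_off2 _ _ _ (fun j => G' j (s j)) K K1).
- by rewrite /bubble /= eqxx (gtn_eqF (ltnSn k)) eqxx.
- by rewrite -val_eqE /= neq_ltn ltnSn.
move=> j jK jK1; rewrite /bubble -!val_eqE /= in jK jK1 *.
by rewrite (negbTE jK) (negbTE jK1) eqG // -val_eqE.
Qed.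

Lemma bubble_admissible : admissible (bubble s k).
Proof.
move=> j jN; have rk := ok_range (adm (ltnW kN)); have rk1 := ok_range (adm kN).
rewrite /bubble; case: ifP => _; [|case: ifP => _; last exact: adm].
- by have [-> | ->] : s k - 1 = 0 \/ s k - 1 = s k.+1; [lia | | apply: adm].
- by have [-> | ->] : s k.+1 + 1 = 0 \/ s k.+1 + 1 = s k; [lia | | apply/adm/ltnW].
Qed.

Lemma potential_bubble : potential (bubble s k) = potential s - 1.
Proof.
rewrite /potential (@sum_bubble _ (fun j x => j%:Z * (1 - x)) (fun j x => j%:Z * (1 - x))) //=.
by rewrite intS; ring.
Qed.

Lemma cost_bubble : shift_cost (bubble s k) <= shift_cost s.
Proof.
rewrite /shift_cost (@sum_bubble _ (fun=> c) (fun=> c)) //= -!addrA gerDl.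
have := ok_range (adm (ltnW kN)); have := ok_range (adm kN); move=> rk1 rk.
have [[-> ->]|[[-> ->]|[sk sk1]]] :
    (s k = 1 /\ s k.+1 = 0) \/ (s k = 0 /\ s k.+1 = -1) \/ (s k = 1 /\ s k.+1 = -1) by lia.
- by rewrite subrr add0r; lra.
- by rewrite sub0r addNr; lra.
have okN1 : ok (-1) by rewrite -sk1; apply: adm.
have ok1 : ok 1 by rewrite -sk; apply/adm/ltnW.
by have := c_convex okN1 ok1; rewrite sk sk1 subrr addNr c0; lra.
Qed.

Lemma val_bubble p :
  shift_val p s <= Num.max (shift_val p (bubble s k)) (shift_val (tperm K K1 * p) (bubble s k)).
Proof.
have adj : k.+1%:Z + s k.+1 <= k%:Z + s k <= k.+1%:Z + s k.+1 + 1.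
  by have := ok_range (adm (ltnW kN)); have := ok_range (adm kN); lia.
have := convexZ_exchange (F_convex (p K)) (F_convex (p K1)) adj.
rewrite /shift_val (@sum_bubble _ (fun j x => F (p j) (j%:Z + x)) (fun j x => F (p j) (j%:Z + x))) //.
rewrite (@sum_bubble _ (fun j x => F ((tperm K K1 * p)%g j) (j%:Z + x))
                       (fun j x => F (p j) (j%:Z + x))) => [|j jK jK1 x]; last first.
  by rewrite /= permM tpermD // eq_sym.
rewrite /= !permM tpermL tpermR !addrA.
by rewrite !le_max => /orP[h|h]; apply/orP; [left|right]; lra.
Qed.

End Bubble.

Lemma nondecreasing_suffices M :
  (forall s p, admissible s -> nondecreasing_on N s -> shift_val p s - shift_cost s <= M) ->
  forall s p, admissible s -> shift_val p s - shift_cost s <= M.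
Proof.
move=> hM s p adm; have [n] : exists n : nat, potential s < n%:Z.
  by exists (`|potential s|%N.+1); have := potential_ge0 adm; lia.
elim: n s p adm => [|n IH] s p adm lt_n; first by have := potential_ge0 adm; lia.
have [mono|] := boolP [forall k : 'I_N, (k.+1 < N)%N ==> (s k <= s k.+1)].
  apply: hM => // k kN.
  by move/forallP: mono => /(_ (Ordinal (ltnW kN)))/implyP; apply.
rewrite negb_forall => /existsP[[k /= _]]; rewrite negb_imply -ltNge => /andP[kN desc].
have adm' := bubble_admissible adm kN desc.
have lt' : potential (bubble s k) < n%:Z by rewrite potential_bubble //; lia.
have := val_bubble adm kN desc p; set p' := (tperm _ _ * p)%g => val_le.
have := cost_bubble adm kN desc; have := IH _ p adm' lt'; have := IH _ p' adm' lt'.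
by move: val_le; rewrite le_max => /orP[] ? ? ? ?; lra.
Qed.

Lemma sum_perm_inv (G : 'M[R]_N) (q : 'S_N) :
  \sum_(i < N) G i (q i) = \sum_(k < N) G (q^-1 k)%g k.
Proof. by rewrite (reindex_inj (@perm_inj _ q^-1)); apply: eq_bigr => k _; rewrite permKV. Qed.

Definition shift_mx s : 'M[R]_N := \matrix_(i, j) F i (j%:Z + s j).

Lemma upm_shift_mx_le s X : upm (shift_mx s) <= X <-> forall p, shift_val p s <= X.
Proof.
have shiftE (q : 'S_N) : \sum_(i < N) shift_mx s i (q i) = shift_val q^-1 s.
  by rewrite sum_perm_inv; apply: eq_bigr => k _; rewrite mxE.
by rewrite upm_le; split=> h p; [have := h p^-1%g; rewrite shiftE invgK | rewrite shiftE].
Qed.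

Lemma cost_step A B : (A <= B <= N)%N ->
  shift_cost (step A B) = c (-1) *+ A + c 1 *+ (N - B).
Proof.
case/andP=> AB BN; rewrite /shift_cost -(big_mkord xpredT (fun k => c (step A B k))).
rewrite (@big_cat_nat _ _ _ A) ?(leq_trans AB) //= (@big_cat_nat _ _ _ B A) //=.
rewrite (eq_big_nat _ _ (F2 := fun=> c (-1))) => [|k /andP[_ kA]]; last by rewrite /step kA.
rewrite (eq_big_nat _ _ (F2 := fun=> c 0) (m := A)) => [|k /andP[Ak kB]]; last first.
  by rewrite /step ltnNge Ak kB.
rewrite (eq_big_nat _ _ (F2 := fun=> c 1) (m := B)) => [|k /andP[Bk _]]; last first.
  by rewrite /step ltnNge (leq_trans AB Bk) ltnNge Bk.
by rewrite !sumr_const_nat c0 mul0rn add0r subn0.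
Qed.

Lemma nondecreasing_val_le s p : admissible s -> nondecreasing_on N s ->
  exists A B, [/\ (A <= B <= N)%N, (0 < A)%N -> ok (-1), (B < N)%N -> ok 1 &
    shift_val p s - shift_cost s <=
    upm (shift_mx (step A B)) - (c (-1) *+ A + c 1 *+ (N - B))].
Proof.
move=> adm mono; have [A [B [ABN sAB]]] := nondecreasing_step (fun k kN => ok_range (adm k kN)) mono.
exists A, B; split=> //.
- by move=> A0; have := adm 0%N ltac:(lia); rewrite sAB ?/step ?A0 //; lia.
- by move=> BN; have := adm B BN; rewrite sAB // /step ltnn ifF //; lia.
have -> : shift_cost s = shift_cost (step A B) by apply: eq_bigr => k _; rewrite sAB.
have -> : shift_val p s = shift_val p (step A B) by apply: eq_bigr => k _; rewrite sAB.
by rewrite -cost_step // lerB // (proj1 (upm_shift_mx_le _ _) (lexx _)).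
Qed.

Definition is_shift_max (G : 'M[R]_N) := forall i (j : 'I_N),
  (forall x, ok x -> F i (j%:Z + x) - c x <= G i j) /\
  exists2 x, ok x & G i j <= F i (j%:Z + x) - c x.

Section ShiftMax.
Variable G : 'M[R]_N.
Hypothesis G_max : is_shift_max G.

Lemma step_le_upm A B : (A <= B <= N)%N -> ((0 < A)%N -> ok (-1)) -> ((B < N)%N -> ok 1) ->
  upm (shift_mx (step A B)) - (c (-1) *+ A + c 1 *+ (N - B)) <= upm G.
Proof.
move=> ABN okA okB; rewrite -cost_step // lerBlDr upm_shift_mx_le => p; rewrite -lerBlDr.
apply: le_trans (proj1 (upm_le G _) (lexx _) p^-1%g); rewrite sum_perm_inv invgK.
rewrite /shift_val /shift_cost -sumrB; apply: ler_sum => k _; apply: (proj1 (G_max _ _)).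
have kN := ltn_ord k; rewrite /step; case: (ltnP k A) => kA; first by apply: okA; lia.
by case: (ltnP k B) => // kB; apply: okB; lia.
Qed.

Lemma upm_le_step X :
  (forall A B, (A <= B <= N)%N -> ((0 < A)%N -> ok (-1)) -> ((B < N)%N -> ok 1) ->
     upm (shift_mx (step A B)) - (c (-1) *+ A + c 1 *+ (N - B)) <= X) ->
  upm G <= X.
Proof.
move=> hX; apply/upm_le => q; rewrite sum_perm_inv; set p := (q^-1)%g.
have w (K : 'I_N) : exists x, ok x && (G (p K) K <= F (p K) (K%:Z + x) - c x).
  by have [_ [x okx le]] := G_max (p K) K; exists x; rewrite okx.
pose s k := if insub k is Some K then xchoose (w K) else 0.
have sK (K : 'I_N) : ok (s K) && (G (p K) K <= F (p K) (K%:Z + s K) - c (s K)).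
  by rewrite /s valK; exact: (xchooseP (w K)).
have adm : admissible s by move=> k kN; have /andP[] := sK (Ordinal kN).
have sorted_le s' p' : admissible s' -> nondecreasing_on N s' ->
    shift_val p' s' - shift_cost s' <= X.
  move=> adm' mono'; have [A [B [ABN okA okB le_step]]] := nondecreasing_val_le p' adm' mono'.
  exact: le_trans le_step (hX A B ABN okA okB).
apply: le_trans (nondecreasing_suffices sorted_le p adm).
by rewrite /shift_val /shift_cost -sumrB; apply: ler_sum => K _; case/andP: (sK K).
Qed.

Lemma upm_shift_max_le X : upm G <= X <->
  forall A B, (A <= B <= N)%N -> ((0 < A)%N -> ok (-1)) -> ((B < N)%N -> ok 1) ->
    upm (shift_mx (step A B)) - (c (-1) *+ A + c 1 *+ (N - B)) <= X.
Proof.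
split=> [le_X A B ABN okA okB|]; last exact: upm_le_step.
exact: le_trans (step_le_upm ABN okA okB) le_X.
Qed.
End ShiftMax.
End ShiftExchange.

Section ShiftMaxOfMax.
Variables (R : realDomainType) (N : nat) (F : 'I_N -> int -> R) (c : int -> R).
Local Notation term i j x := (F i ((j : nat)%:Z + x) - c x).

Lemma is_shift_max2 (G : 'M[R]_N) x y :
  (forall i j, G i j = Num.max (term i j x) (term i j y)) ->
  is_shift_max F c (pred2 x y) G.
Proof.
move=> GE i j; rewrite GE; split=> [z /pred2P[]->|]; rewrite ?le_max ?lexx ?orbT //.
by case: leP => _; [exists y | exists x]; rewrite /= ?eqxx ?orbT.
Qed.

Lemma is_shift_max3 (G : 'M[R]_N) x y z :
  (forall i j, G i j = Num.max (term i j x) (Num.max (term i j y) (term i j z))) ->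
  is_shift_max F c (pred3 x y z) G.
Proof.
move=> GE i j; rewrite GE; split=> [w /or3P[] /eqP->|]; rewrite ?le_max ?lexx ?orbT //.
by case: leP => _; [case: leP => _; [exists z | exists y] | exists x]; rewrite /= ?eqxx ?orbT.
Qed.
End ShiftMaxOfMax.

Section Antidiagonal.
Variables (R : realDomainType) (N : nat) (T : int -> int -> R).

(* [Psi k1 k2] is the maximum of [T (k2-i-1) (N-k1+i)] over [k1+k2-N <= i <= min k1 k2];
   the four cases of its definition are four parametrisations of this range. *)
Definition antidiag_le k1 k2 X := forall i, (k1 + k2 - N <= i)%N -> (i <= minn k1 k2)%N ->
  T (k2%:Z - i%:Z - 1) (N%:Z - k1%:Z + i%:Z) <= X.

Let T_le a b a' b' X : a = a' -> b = b' -> T a' b' <= X -> T a b <= X.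
Proof. by move=> -> ->. Qed.

Lemma maxto_antidiag1 k1 k2 X : (k1 <= N)%N -> (k2 <= k1)%N -> (k2 <= N - k1)%N ->
  maxto k2 (fun i => T (k2%:Z - i%:Z - 1) (N%:Z - k1%:Z + i%:Z)) <= X <-> antidiag_le k1 k2 X.
Proof. by move=> *; rewrite maxto_le; split=> le_X i *; apply: le_X; lia. Qed.

Lemma maxto_antidiag2 k1 k2 X : (k1 <= N)%N -> (k2 <= N - k1)%N -> (k1 <= k2)%N ->
  maxto k1 (fun i => T (k2%:Z - i%:Z - 1) (N%:Z - k1%:Z + i%:Z)) <= X <-> antidiag_le k1 k2 X.
Proof. by move=> *; rewrite maxto_le; split=> le_X i *; apply: le_X; lia. Qed.

Lemma maxto_antidiag3 k1 k2 X : (k1 <= N)%N -> (k2 <= k1)%N -> (N - k1 <= k2)%N ->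
  maxto (N - k1) (fun i => T (i%:Z - 1) (N%:Z - k1%:Z + k2%:Z - i%:Z)) <= X <->
  antidiag_le k1 k2 X.
Proof.
move=> *; rewrite maxto_le; split=> le_X i *.
  by apply: (T_le _ _ (le_X (k2 - i)%N _)); lia.
by apply: (T_le _ _ (le_X (k2 - i)%N _ _)); lia.
Qed.

Lemma maxto_antidiag4 k1 k2 X : (k2 <= N)%N -> (N - k1 <= k2)%N -> (k1 <= k2)%N ->
  maxto (N - k2) (fun i => T (N%:Z - k1%:Z - i%:Z - 1) (k2%:Z + i%:Z)) <= X <->
  antidiag_le k1 k2 X.
Proof.
move=> *; rewrite maxto_le; split=> le_X i *.
  by apply: (T_le _ _ (le_X (i - (k1 + k2 - N))%N _)); lia.
by apply: (T_le _ _ (le_X (k1 + k2 - N + i)%N _ _)); lia.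
Qed.

Section Recurrences.
Variables (k1 k2 : nat) (X : R).
Hypotheses (k1_range : (1 <= k1 <= N)%N) (k2_range : (1 <= k2 <= N)%N).

Lemma antidiag_le_below : (k1 + k2 <= N)%N ->
  antidiag_le k1 k2 X <-> antidiag_le k1.-1 k2.-1 X /\ T (k2%:Z - 1) (N%:Z - k1%:Z) <= X.
Proof.
move=> below; split=> [le_X | [le_X le_X0] [|i] *].
- by split=> [i *|]; [apply: (T_le _ _ (le_X i.+1 _ _)) | apply: (T_le _ _ (le_X 0%N _ _))]; lia.
- by apply: (T_le _ _ le_X0); lia.
by apply: (T_le _ _ (le_X i _ _)); lia.
Qed.

Lemma antidiag_le_above : (N.+2 <= k1 + k2)%N ->
  antidiag_le k1.-1 k2.-1 X <-> antidiag_le k1 k2 X /\ T (N%:Z - k1%:Z) (k2%:Z - 1) <= X.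
Proof.
move=> above; split=> [le_X | [le_X le_X0] i *].
  split=> [i *|]; first by apply: (T_le _ _ (le_X i.-1 _ _)); lia.
  by apply: (T_le _ _ (le_X (k1 + k2 - N - 2)%N _ _)); lia.
case: (ltnP (k1 + k2 - N - 2)%N i) => i_lo; last by apply: (T_le _ _ le_X0); lia.
by apply: (T_le _ _ (le_X i.+1 _ _)); lia.
Qed.

Lemma antidiag_le_on : (k1 + k2 = N.+1)%N -> antidiag_le k1 k2 X <-> antidiag_le k1.-1 k2.-1 X.
Proof.
move=> on; split=> le_X i *; first by apply: (T_le _ _ (le_X i.+1 _ _)); lia.
by apply: (T_le _ _ (le_X i.-1 _ _)); lia.
Qed.
End Recurrences.
End Antidiagonal.

Lemma nth_cols N A B j : (A <= B <= N)%N -> (j < N)%N ->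
  nth 0 (cols N (A%:Z - 1) B%:Z) j = j%:Z + step A B j.
Proof.
case/andP=> AB BN jN.
have iotaE : iota 0 N.+2 = iota 0 A ++ A :: iota A.+1 (B - A) ++ B.+1 :: iota B.+2 (N - B).
  rewrite -[in LHS](_ : (A + ((B - A).+1 + (N - B).+1))%N = N.+2); last by lia.
  by rewrite !iotaD add0n /= (_ : (A + (B - A).+1)%N = B.+1) //; lia.
have keep m n : (m + n <= A)%N || (A < m)%N -> (m + n <= B.+1)%N || (B.+1 < m)%N ->
    [seq k <- iota m n | (k != A) && (k != B.+1)] = iota m n.
  move=> mA mB; apply/all_filterP/allP => k; rewrite mem_iota => /andP[mk kn].
  by apply/andP; split; apply/eqP; lia.
rewrite /cols filter_map (eq_filter (a2 := fun k : nat => (k != A) && (k != B.+1))); last first.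
  by move=> k /=; apply/andP/andP => -[/eqP h1 /eqP h2]; split; apply/eqP; lia.
rewrite iotaE !filter_cat /= eqxx /= filter_cat /= eqxx andbF /= !keep; [|lia..].
rewrite (nth_map 0%N) ?size_cat ?size_iota; last by lia.
rewrite /step !nth_cat !size_iota; case: (ltnP j A) => jA; first by rewrite nth_iota //; lia.
have -> : (j - A < B - A)%N = (j < B)%N by lia.
by case: (ltnP j B) => jB; rewrite nth_iota; lia.
Qed.

Section Toda.
Variables (R : realFieldType) (N : nat) (d e : R) (r c c' : 'I_N -> R).

Local Notation eta := (Defs.eta d e r c).
Local Notation eta' := (Defs.eta' d e r c').
Local Notation phi := (phi d e r c c').
Local Notation tau := (tau d e r c c').
Local Notation tauc := (tauc d e r c c').

Lemma eta_lD i l m n a :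
  eta i (l + a) m n = eta i l m n + Num.max 0 (r i - d) *~ a /\
  eta' i (l + a) m n = eta' i l m n + Num.max 0 (- r i - d) *~ a.
Proof. by rewrite /Defs.eta /Defs.eta' !mulrzDr; split; ring. Qed.

Lemma eta_mD i l m n b :
  eta i l (m + b) n = eta i l m n - Num.max 0 (- r i - e) *~ b /\
  eta' i l (m + b) n = eta' i l m n - Num.max 0 (r i - e) *~ b.
Proof. by rewrite /Defs.eta /Defs.eta' !mulrzDr; split; ring. Qed.

Lemma eta_nD i l m n k :
  eta i l m (n + k) = eta i l m n + r i *~ k /\
  eta' i l m (n + k) = eta' i l m n - r i *~ k.
Proof. by rewrite /Defs.eta /Defs.eta' !mulrzDr; split; ring. Qed.

Lemma phi_lD1 i l m n : phi i (l + 1) m n = Num.max (phi i l m n) (phi i l m (n + 1) - d).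
Proof.
rewrite /Defs.phi; have [-> ->] := eta_lD i l m n 1; have [-> ->] := eta_nD i l m n 1.
by rewrite !mulr1z !addr_maxr !addr0 maxACA addr_maxl !addrA.
Qed.

Lemma phi_mB1 i l m n : phi i l (m - 1) n = Num.max (phi i l m n) (phi i l m (n - 1) - e).
Proof.
rewrite /Defs.phi; have [-> ->] := eta_mD i l m n (-1); have [-> ->] := eta_nD i l m n (-1).
by rewrite !mulrN1z !opprK !addr_maxr !addr0 maxACA addr_maxl !addrA.
Qed.

Lemma phi_convexZ i l m n : convexZ (fun u => phi i l m (n + u)).
Proof.
move=> u; rewrite /Defs.phi !addrA.
have [-> ->] := eta_nD i l m (n + u) (-1); have [-> ->] := eta_nD i l m (n + u) 1.
rewrite !mulrN1z mulr1z opprK; set E := eta _ _ _ _; set E' := eta' _ _ _ _.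
have [_|_] := leP E E'.
  by apply: (@le_trans _ _ ((E' + r i) + (E' - r i))); [lra | apply: lerD; rewrite le_max lexx ?orbT].
by apply: (@le_trans _ _ ((E - r i) + (E + r i))); [lra | apply: lerD; rewrite le_max lexx ?orbT].
Qed.

Let F l m n i u := phi i l m (n + u).

Lemma tauc_step l m n A B : (A <= B <= N)%N ->
  tauc l m n (A%:Z - 1) B%:Z = upm (shift_mx (F l m n) (step A B)).
Proof. by move=> ABN; congr upm; apply/matrixP => i j; rewrite !mxE nth_cols. Qed.

Lemma tauc_shift l m n b : (b <= N)%N ->
  tauc l m (n + 1) (b%:Z - 1) N%:Z = tauc l m n (-1) b%:Z.
Proof.
move=> bN; rewrite -[-1]/(0%N%:Z - 1) !tauc_step ?leqnn ?bN //.
congr upm; apply/matrixP => i j; rewrite !mxE /step ltn_ord.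
by congr Defs.phi; rewrite ltn0; case: ltnP => _; lia.
Qed.

Lemma tau_tauc l m n : tau l m n = tauc l m n (-1) N%:Z.
Proof.
rewrite -[-1]/(0%N%:Z - 1) tauc_step ?leqnn //.
by congr upm; apply/matrixP => i j; rewrite !mxE /step ltn_ord addr0.
Qed.

Hypotheses (d_ge0 : 0 <= d) (e_ge0 : 0 <= e).

(* A column shifted by +1 comes from an l-step and costs delta, one shifted by -1 from an
   m-step and costs epsilon. *)
Let cost (x : int) : R := if x == 1 then d else if x == -1 then e else 0.

Lemma upm_le_tauc (ok : pred int) l m n (G : 'M[R]_N) X :
  (forall x, ok x -> -1 <= x <= 1) -> ok 0 -> is_shift_max (F l m n) cost ok G ->
  upm G <= X <->
  forall A B, (A <= B <= N)%N -> ((0 < A)%N -> ok (-1)) -> ((B < N)%N -> ok 1) ->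
    tauc l m n (A%:Z - 1) B%:Z - (A%:R * e + (N - B)%:R * d) <= X.
Proof.
move=> ok_range ok0 G_max.
have c_convex : ok (-1) -> ok 1 -> 0 <= cost (-1) + cost 1 by move=> _ _; apply: addr_ge0.
rewrite (upm_shift_max_le (fun i => phi_convexZ i l m n) ok_range ok0 (erefl : cost 0 = 0) c_convex G_max).
by split=> le_X A B ABN okA okB; have := le_X A B ABN okA okB; rewrite tauc_step // !mulr_natl.
Qed.

Lemma tau_lD1 l m n :
  tau (l + 1) m n = maxto N (fun k1 => tauc l m n (-1) (N%:Z - k1%:Z) - k1%:R * d).
Proof.
apply: le_bounds_eq => X; rewrite maxto_le (@upm_le_tauc (pred2 0 1) l m n) //; last first.
- by apply: is_shift_max2 => i j; rewrite /F /cost mxE phi_lD1 /= addr0 subr0 addrA.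
- by move=> x /pred2P[]->.
split=> [le_X k1 k1N | le_X A B /andP[AB BN] okA _].
  have := le_X 0%N (N - k1)%N; rewrite subKn // mulr0n mul0r !add0r -subzn //.
  by apply=> //; lia.
have A0 : A = 0%N by case: A okA {AB le_X} => // A /(_ isT).
rewrite A0 mulr0n mul0r !add0r.
by have := le_X (N - B)%N (leq_subr B N); rewrite subzn ?leq_subr // subKn.
Qed.

Lemma tau_mB1 l m n :
  tau l (m - 1) n = maxto N (fun k2 => tauc l m n (k2%:Z - 1) N%:Z - k2%:R * e).
Proof.
apply: le_bounds_eq => X; rewrite maxto_le (@upm_le_tauc (pred2 0 (-1)) l m n) //; last first.
- by apply: is_shift_max2 => i j; rewrite /F /cost mxE phi_mB1 /= addr0 subr0 addrA.
- by move=> x /pred2P[]->.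
split=> [le_X k2 k2N | le_X A B /andP[AB BN] _ okB].
  by have := le_X k2 N; rewrite subnn mulr0n mul0r addr0; apply=> //; lia.
have -> : B = N by case: (ltnP B N) => [/okB | NB] //; lia.
by rewrite subnn mulr0n mul0r addr0; apply: le_X; lia.
Qed.

Lemma tau_lD1_nB1 l m n :
  tau (l + 1) m (n - 1) = maxto N (fun k1 => tauc l m n (N%:Z - k1%:Z - 1) N%:Z - k1%:R * d).
Proof.
rewrite tau_lD1; apply: eq_maxto => k1 k1N.
by rewrite subzn // -tauc_shift ?leq_subr // subrK.
Qed.

Lemma tau_mB1_nD1 l m n :
  tau l (m - 1) (n + 1) = maxto N (fun k2 => tauc l m n (-1) k2%:Z - k2%:R * e).
Proof. by rewrite tau_mB1; apply: eq_maxto => k2 k2N; rewrite tauc_shift. Qed.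

Section Psi.
Variables (l m n : int).
Local Notation Ps := (Psi d e r c c' l m n).
Local Notation T := (tauc l m n).

Lemma Psi_le k1 k2 X : (k1 <= N)%N -> (k2 <= N)%N -> Ps k1 k2 <= X <-> antidiag_le N T k1 k2 X.
Proof.
move=> k1N k2N; rewrite /Psi.
case: ifP => C1; first by apply: maxto_antidiag1; move: C1 => /andP[]; lia.
case: ifP => C2; first by apply: maxto_antidiag2; move: C2 => /andP[]; lia.
case: ifP => C3; first by apply: maxto_antidiag3; move: C3 => /andP[]; lia.
by apply: maxto_antidiag4; move: C1 C2 C3; lia.
Qed.

Lemma Psi_case1 k1 k2 : (k1 <= N)%N -> (k2 <= N)%N -> (k2 <= k1)%N -> (k2 <= N - k1)%N ->
  Ps k1 k2 = maxto k2 (fun i => T (k2%:Z - i%:Z - 1) (N%:Z - k1%:Z + i%:Z)).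
Proof. by move=> *; apply: le_bounds_eq => X; rewrite Psi_le // maxto_antidiag1. Qed.

Lemma Psi_case2 k1 k2 : (k1 <= N)%N -> (k2 <= N)%N -> (k2 <= N - k1)%N -> (k1 <= k2)%N ->
  Ps k1 k2 = maxto k1 (fun i => T (k2%:Z - i%:Z - 1) (N%:Z - k1%:Z + i%:Z)).
Proof. by move=> *; apply: le_bounds_eq => X; rewrite Psi_le // maxto_antidiag2. Qed.

Lemma Psi_case3 k1 k2 : (k1 <= N)%N -> (k2 <= N)%N -> (k2 <= k1)%N -> (N - k1 <= k2)%N ->
  Ps k1 k2 = maxto (N - k1) (fun i => T (i%:Z - 1) (N%:Z - k1%:Z + k2%:Z - i%:Z)).
Proof. by move=> *; apply: le_bounds_eq => X; rewrite Psi_le // maxto_antidiag3. Qed.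

Lemma Psi_case4 k1 k2 : (k1 <= N)%N -> (k2 <= N)%N -> (N - k1 <= k2)%N -> (k1 <= k2)%N ->
  Ps k1 k2 = maxto (N - k2) (fun i => T (N%:Z - k1%:Z - i%:Z - 1) (k2%:Z + i%:Z)).
Proof. by move=> *; apply: le_bounds_eq => X; rewrite Psi_le // maxto_antidiag4. Qed.

Section Recurrences.
Variables (k1 k2 : nat).
Hypotheses (k1_range : (1 <= k1 <= N)%N) (k2_range : (1 <= k2 <= N)%N).

Let Psi_le_pred X : Ps k1.-1 k2.-1 <= X <-> antidiag_le N T k1.-1 k2.-1 X.
Proof. by apply: Psi_le; lia. Qed.

Let Psi_le_cur X : Ps k1 k2 <= X <-> antidiag_le N T k1 k2 X.
Proof. by apply: Psi_le; lia. Qed.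

Lemma Psi_rec_below : k2%:Z - 1 < N%:Z - k1%:Z ->
  Ps k1 k2 = Num.max (Ps k1.-1 k2.-1) (T (k2%:Z - 1) (N%:Z - k1%:Z)).
Proof.
move=> below; apply: le_bounds_eq => X; rewrite ge_max -(rwP andP) Psi_le_pred Psi_le_cur.
by apply: antidiag_le_below => //; lia.
Qed.

Lemma Psi_rec_above : k2%:Z - 1 > N%:Z - k1%:Z ->
  Ps k1.-1 k2.-1 = Num.max (Ps k1 k2) (T (N%:Z - k1%:Z) (k2%:Z - 1)).
Proof.
move=> above; apply: le_bounds_eq => X; rewrite ge_max -(rwP andP) Psi_le_pred Psi_le_cur.
by apply: antidiag_le_above => //; lia.
Qed.

Lemma Psi_rec_on : k2%:Z - 1 = N%:Z - k1%:Z -> Ps k1 k2 = Ps k1.-1 k2.-1.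
Proof.
move=> on; apply: le_bounds_eq => X; rewrite Psi_le_pred Psi_le_cur.
by apply: antidiag_le_on => //; lia.
Qed.
End Recurrences.

Lemma tau_lD1_mB1 : tau (l + 1) (m - 1) n =
  maxto N (fun k1 => maxto N (fun k2 => Ps k1 k2 - k1%:R * d - k2%:R * e)).
Proof.
apply: le_bounds_eq => X.
rewrite (@upm_le_tauc (pred3 0 1 (-1)) l m n) //; last first.
- apply: is_shift_max3 => i j; rewrite /F /cost mxE phi_mB1 !phi_lD1 subrK /= addr0 subr0 !addrA.
  move: (phi i l m (n + j)) (phi i l m (n + j + 1)) (phi i l m (n + j - 1)) => a b a'.
  have absorb : Num.max (Num.max a (b - d)) (a - d - e) = Num.max a (b - d).
    by apply/max_idPl; rewrite le_max -addrA gerDl -opprD oppr_le0 addr_ge0.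
  by rewrite addr_maxl (maxC (_ - e)) maxA absorb -maxA.
- by move=> x /or3P[] /eqP->.
split=> [le_X | le_X A B /andP[AB BN] _ _].
  apply/maxto_le => k1 k1N; apply/maxto_le => k2 k2N.
  suff : Ps k1 k2 <= X + k1%:R * d + k2%:R * e by lra.
  apply/Psi_le => // i i_lo i_hi.
  have := le_X (k2 - i)%N (N - k1 + i)%N ltac:(lia) (fun=> isT) (fun=> isT).
  have -> : (k2 - i)%N%:Z = k2%:Z - i%:Z by lia.
  have -> : (N - k1 + i)%N%:Z = N%:Z - k1%:Z + i%:Z by lia.
  have : (k2 - i)%:R * e <= k2%:R * e by rewrite ler_wpM2r // ler_nat leq_subr.
  have : (N - (N - k1 + i))%:R * d <= k1%:R * d by rewrite ler_wpM2r // ler_nat; lia.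
  lra.
have := proj1 (maxto_le _ _ _) le_X (N - B)%N (leq_subr _ _).
move/maxto_le/(_ A ltac:(lia)).
have := proj1 (@Psi_le (N - B)%N A _ (leq_subr _ _) ltac:(lia)) (lexx _) 0%N ltac:(lia) ltac:(lia).
have -> : A%:Z - 0%N%:Z - 1 = A%:Z - 1 by lia.
have -> : N%:Z - (N - B)%N%:Z + 0%N%:Z = B%:Z by lia.
lra.
Qed.
End Psi.

End Toda.

Theorem lemma9 (R : realFieldType) (N : nat) (d e : R) (r c c' : 'I_N -> R)
  (HN : (1 <= N)%N) (Hd : 0 < d) (He : 0 < e) (l m n : int) :
  let tau := tau d e r c c' in
  let tc := tauc d e r c c' l m n in
  let Ps := Psi d e r c c' l m n in
  let NN := (N : nat)%:Z in
  (tau (l + 1) m n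
        = maxto N (fun k1 => tc (-1) (NN - k1%:Z) - k1%:R * d)/\
      tau l (m - 1) n
        = maxto N (fun k2 => tc (k2%:Z - 1) NN - k2%:R * e)/\
      tau (l + 1) m (n - 1)
        = maxto N (fun k1 => tc (NN - k1%:Z - 1) NN - k1%:R * d)/\
      tau l (m - 1) (n + 1)
        = maxto N (fun k2 => tc (-1) k2%:Z - k2%:R * e)/\
      tau l m n = tc (-1) NN/\
      tau (l + 1) (m - 1) n
        = maxto N (fun k1 => maxto N (fun k2 => Ps k1 k2 - k1%:R * d - k2%:R * e))) /\
    (* the four case formulas defining Psi all hold (consistency on overlaps) *)
    (forall k1 k2 : nat, (k1 <= N)%N -> (k2 <= N)%N ->
          (k2 <= k1)%N -> (k2 <= N - k1)%N ->
          Ps k1 k2 = maxto k2 (fun i => tc (k2%:Z - i%:Z - 1) (NN - k1%:Z + i%:Z))) /\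
    (forall k1 k2 : nat, (k1 <= N)%N -> (k2 <= N)%N ->
          (k2 <= N - k1)%N -> (k1 <= k2)%N ->
          Ps k1 k2 = maxto k1 (fun i => tc (k2%:Z - i%:Z - 1) (NN - k1%:Z + i%:Z))) /\
    (forall k1 k2 : nat, (k1 <= N)%N -> (k2 <= N)%N ->
          (k2 <= k1)%N -> (N - k1 <= k2)%N ->
          Ps k1 k2 = maxto (N - k1) (fun i => tc (i%:Z - 1) (NN - k1%:Z + k2%:Z - i%:Z))) /\
    (forall k1 k2 : nat, (k1 <= N)%N -> (k2 <= N)%N ->
          (N - k1 <= k2)%N -> (k1 <= k2)%N ->
          Ps k1 k2 = maxto (N - k2) (fun i => tc (NN - k1%:Z - i%:Z - 1) (k2%:Z + i%:Z))) /\
    (forall k1 k2 : nat, (1 <= k1 <= N)%N -> (1 <= k2 <= N)%N ->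
          k2%:Z - 1 < NN - k1%:Z ->
          Ps k1 k2 = Num.max (Ps k1.-1 k2.-1) (tc (k2%:Z - 1) (NN - k1%:Z))) /\
    (forall k1 k2 : nat, (1 <= k1 <= N)%N -> (1 <= k2 <= N)%N ->
          k2%:Z - 1 > NN - k1%:Z ->
          Ps k1.-1 k2.-1 = Num.max (Ps k1 k2) (tc (NN - k1%:Z) (k2%:Z - 1))) /\
    (forall k1 k2 : nat, (1 <= k1 <= N)%N -> (1 <= k2 <= N)%N ->
          k2%:Z - 1 = NN - k1%:Z ->
          Ps k1 k2 = Ps k1.-1 k2.-1).
Proof.
cbv zeta; have d_ge0 := ltW Hd; have e_ge0 := ltW He.
split.
  split; first exact: tau_lD1.
  split; first exact: tau_mB1.
  split; first exact: tau_lD1_nB1.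
  split; first exact: tau_mB1_nD1.
  split; first exact: tau_tauc.
  exact: tau_lD1_mB1.
split; first exact: Psi_case1.
split; first exact: Psi_case2.
split; first exact: Psi_case3.
split; first exact: Psi_case4.
split; first exact: Psi_rec_below.
split; first exact: Psi_rec_above.
exact: Psi_rec_on.
Qed.
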